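(* Let $U$ be a Hilbert space, $\widetilde H_{i+1}: U\rightrightarrows U$, and $M_{i+1}, Z_{i+1}\in\mathcal{L}(U;U)$ with $Z_{i+1}M_{i+1}$ self-adjoint, positive definite and invertible. Let $u^i, u^{i+1}\in U$ satisfy $0\in\widetilde H_{i+1}(u^{i+1}) + M_{i+1}(u^{i+1}-u^i)$. Then \[ \tfrac12\|u^{i+1}-u^i\|^2_{Z_{i+1}M_{i+1}} \ge \tfrac12\operatorname{dist}^2_{Z_{i+1}^*(Z_{i+1}M_{i+1})^{-1}Z_{i+1}}\big(0, \widetilde H_{i+1}(u^{i+1})\big). \]
   Context: For $T\in\mathcal{L}(U;U)$: $\|x\|_T^2:=\langle Tx,x\rangle$ and $\operatorname{dist}^2_T(z,A):=\inf_{u\in A}\|z-u\|_T^2$. *)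

From HB Require Import structures.
From mathcomp Require Import all_boot all_order all_algebra.
From mathcomp Require Import all_classical all_reals all_analysis.
Set Implicit Arguments. Unset Strict Implicit. Unset Printing Implicit Defensive.
Import Order.TTheory GRing.Theory Num.Theory.
Import numFieldNormedType.Exports.
Local Open Scope classical_set_scope.
Local Open Scope ring_scope.

(* A real Hilbert space: a complete normed space whose norm comes from
   the inner product [ip]. *)
Definition is_inner_product (R : realType) (U : completeNormedModType R)
  (ip : U -> U -> R) : Prop :=
  [/\ (forall x y, ip x y = ip y x),
      (forall a x y z, ip (a *: x + y) z = a * ip x z + ip y z)
    & (forall x, ip x x = `|x| ^+ 2)].

(* Elements of L(U;U): bounded (= continuous) linear operators. *)
Definition bounded_linear (R : realType) (U : completeNormedModType R)
  (T : U -> U) : Prop :=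
  (forall a x y, T (a *: x + y) = a *: T x + T y) /\ continuous T.

Definition sqnormT (R : realType) (U : completeNormedModType R)
  (ip : U -> U -> R) (T : U -> U) (x : U) : R := ip (T x) x.

Definition dist2T (R : realType) (U : completeNormedModType R)
  (ip : U -> U -> R) (T : U -> U) (z : U) (A : set U) : R :=
  inf [set sqnormT ip T (z - u) | u in A].

From HB Require Import structures.
From mathcomp Require Import all_boot all_order all_algebra.
From mathcomp Require Import all_classical all_reals all_analysis.
Import Order.TTheory GRing.Theory Num.Theory.
Import numFieldNormedType.Exports.
Local Open Scope classical_set_scope.
Local Open Scope ring_scope.

(* The inclusion says that [h := - M (u1 - u0)] lies in [Ht u1], so the
   infimum defining the distance is at most [||M (u1 - u0)||_T^2] with
   [T = Z^* (Z M)^-1 Z].  Moving [Z^*] across the inner product and using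
   [(Z M)^-1 Z M = id], this value is exactly [||u1 - u0||_(Z M)^2].  The
   infimum is a genuine lower bound because [T] is positive semidefinite:
   [<T x, x> = <Z M v, v>] with [v = (Z M)^-1 Z x]. *)

Section AdjointInverse.
Context {R : realType} {U : completeNormedModType R} {ip : U -> U -> R}.

Lemma dist2T_le_sqnormT {T : U -> U} {z h : U} {A : set U} :
  (forall x, 0 <= sqnormT ip T x) -> A h ->
  dist2T ip T z A <= sqnormT ip T (z - h).
Proof.
move=> T_ge0 Ah; apply: ge_inf; last by exists h.
by exists 0 => _ [u _ <-]; exact: T_ge0.
Qed.

Hypothesis ip_inner : is_inner_product ip.

Let ipC : forall x y, ip x y = ip y x.
Proof. by case: ip_inner. Qed.

Lemma ip0l (y : U) : ip 0 y = 0.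
Proof.
case: ip_inner => _ ipL _; have := ipL 1 0 0 y.
by rewrite scale1r addr0 mul1r -{1}[ip 0 y]addr0 => /addrI.
Qed.

Context {M Z Zadj W : U -> U}.
Hypothesis ZadjE : forall x y, ip (Z x) y = ip x (Zadj y).

Lemma sqnormT_adj_inv_ge0 (x : U) :
  (forall v, v != 0 -> 0 < ip (Z (M v)) v) -> (forall y, Z (M (W y)) = y) ->
  0 <= sqnormT ip (Zadj \o W \o Z) x.
Proof.
move=> ZM_pd ZMW; rewrite /sqnormT /= ipC -ZadjE -{1}(ZMW (Z x)).
have [->|v_neq0] := eqVneq (W (Z x)) 0; first by rewrite ipC ip0l.
exact/ltW/ZM_pd.
Qed.

Lemma sqnormT_adj_inv_comp (x : U) :
  (forall y, W (Z (M y)) = y) ->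
  sqnormT ip (Zadj \o W \o Z) (M x) = sqnormT ip (Z \o M) x.
Proof. by move=> WZM; rewrite /sqnormT /= WZM ipC -ZadjE. Qed.

End AdjointInverse.

Theorem lemma3p13 (R : realType) (U : completeNormedModType R)
  (ip : U -> U -> R) (Hip : is_inner_product ip)
  (Ht : U -> set U) (M Z Zadj W : U -> U)
  (HM : bounded_linear M) (HZ : bounded_linear Z)
  (HZadj_bl : bounded_linear Zadj)
  (HZadj : forall x y, ip (Z x) y = ip x (Zadj y))
  (Hsa : forall x y, ip (Z (M x)) y = ip x (Z (M y)))
  (Hpd : forall x, x != 0 -> 0 < ip (Z (M x)) x)
  (HW : bounded_linear W)
  (HWl : forall x, W (Z (M x)) = x) (HWr : forall x, Z (M (W x)) = x)
  (u0 u1 : U)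
  (Hinc : exists2 h, Ht u1 h & h + M (u1 - u0) = 0) :
  2^-1 * sqnormT ip (Z \o M) (u1 - u0) >=
  2^-1 * dist2T ip (Zadj \o W \o Z) 0 (Ht u1).
Proof.
case: Hinc => h Hh hE.
have h_opp : 0 - h = M (u1 - u0).
  by apply/eqP; rewrite sub0r eq_sym -addr_eq0 addrC hE.
have T_ge0 x := sqnormT_adj_inv_ge0 Hip HZadj x Hpd HWr.
rewrite ler_pM2l ?invr_gt0 ?ltr0n // -(sqnormT_adj_inv_comp Hip HZadj _ HWl).
rewrite -h_opp; exact: dist2T_le_sqnormT T_ge0 Hh.
Qed.
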